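(* For every $n\geq0$, $$\sum_{\sigma\in\mathfrak S_n}(xy)^{{\rm L}(\sigma)}\Bigl(\frac{x+y}{2}\Bigr)^{n-2{\rm L}(\sigma)}\beta^{{\rm RLmin}(\sigma)}=\sum_{\sigma\in\mathfrak S_{n+1}}x^{{\rm des}(\sigma)}y^{n-{\rm des}(\sigma)}\Bigl(\frac{\beta}{2}\Bigr)^{{\rm LRmin}(\sigma)+{\rm RLmin}(\sigma)-2}.$$
   Context: For $\sigma=\sigma_1\cdots\sigma_m\in\mathfrak S_m$: ${\rm des}(\sigma)$ is the number of $i\in[m-1]$ with $\sigma_i>\sigma_{i+1}$; ${\rm L}(\sigma)$ (left peaks) is the number of $i$ with $1\le i<m$ and $\sigma_{i-1}<\sigma_i>\sigma_{i+1}$, with the convention $\sigma_0=0$; ${\rm LRmin}(\sigma)$ is the number of $i$ with $\sigma_j>\sigma_i$ for all $j<i$; ${\rm RLmin}(\sigma)$ is the number of $i$ with $\sigma_j>\sigma_i$ for all $j>i$. $\mathfrak S_0$ consists of the empty permutation (contributing $1$). *)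

From mathcomp Require Import all_boot all_order all_algebra all_fingroup.
Set Implicit Arguments. Unset Strict Implicit. Unset Printing Implicit Defensive.

(* One-line notation of sigma in S_m with values shifted to 1..m, and the
   convention sigma_0 = 0:  sig s i = sigma_i for 1 <= i <= m, sig s 0 = 0. *)
Definition sig (m : nat) (s : 'S_m) (i : nat) : nat :=
  nth 0 (0 :: [seq (s j).+1 | j <- enum 'I_m]) i.

Definition des (m : nat) (s : 'S_m) : nat :=
  \sum_(1 <= i < m) (sig s i.+1 < sig s i).

Definition lpk (m : nat) (s : 'S_m) : nat :=
  \sum_(1 <= i < m) ((sig s i.-1 < sig s i) && (sig s i.+1 < sig s i)).

Definition lrmin (m : nat) (s : 'S_m) : nat :=
  \sum_(1 <= i < m.+1) all (fun j => sig s i < sig s j) (iota 1 i.-1).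

Definition rlmin (m : nat) (s : 'S_m) : nat :=
  \sum_(1 <= i < m.+1) all (fun j => sig s i < sig s j) (iota i.+1 (m - i)).

(* Both sides are read as polynomials in x.  Every permutation of [n+1] arises
   exactly once by inserting the letter n+1 into one of the slots of a
   permutation of [n], and such an insertion changes des, left peaks, lrmin and
   rlmin only locally: e.g. a slot next to a left peak, or the last slot, keeps
   the number of left peaks, while every other slot creates one.  Summing the
   weights over all slots, both sides turn out to obey the same recurrence
     P_(n+1) = (beta (x + y) / 2 + n x) P_n + x (y - x) P_n',
   and they agree for n = 0. *)

From mathcomp Require Import all_boot all_order all_algebra all_fingroup.
From Stdlib Require Import FunctionalExtensionality.
From mathcomp Require Import zify ring.
Import GRing.Theory Num.Theory.
Local Open Scope ring_scope.

Section Words.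
Local Open Scope nat_scope.
Implicit Types (f : nat -> nat) (M i m : nat).

Definition desw m f := \sum_(1 <= k < m) (f k.+1 < f k).
Definition peakw f k := (f k.-1 < f k) && (f k.+1 < f k).
Definition lpkw m f := \sum_(1 <= k < m) peakw f k.
Definition lrminw m f :=
  \sum_(1 <= k < m.+1) all (fun j => f k < f j) (iota 1 k.-1).
Definition rlminw m f :=
  \sum_(1 <= k < m.+1) all (fun j => f k < f j) (iota k.+1 (m - k)).

Definition insw M i f k :=
  if k <= i then f k else if k == i.+1 then M else f k.-1.

Lemma insw_le M i f k : k <= i -> insw M i f k = f k.
Proof. by rewrite /insw => ->. Qed.

Lemma insw_eq M i f : insw M i f i.+1 = M.
Proof. by rewrite /insw ltnn eqxx. Qed.

Lemma insw_gt M i f k : i.+1 < k -> insw M i f k = f k.-1.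
Proof. by move=> h; rewrite /insw !ifN //; lia. Qed.

Lemma big_nat_peel (F : nat -> nat) i m :
  \sum_(i <= k < m) F k = (i < m) * F i + \sum_(i.+1 <= k < m) F k.
Proof. by case: ltnP => h; [rewrite big_ltn ?mul1n | rewrite !big_geq // leqW]. Qed.

Lemma big_nat_succ (F : nat -> nat) i m :
  \sum_(i.+1 <= k < m.+1) F k = \sum_(i <= k < m) F k.+1.
Proof. by rewrite big_add1. Qed.

Lemma desw_from0 m f : f 0 = 0 -> desw m f = \sum_(0 <= k < m) (f k.+1 < f k).
Proof. by move=> f0; rewrite big_nat_peel f0 ltn0 muln0. Qed.

Lemma lpkw_from0 m f : lpkw m f = \sum_(0 <= k < m) peakw f k.
Proof. by rewrite big_nat_peel /peakw ltnn muln0. Qed.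

Lemma sum_nat_negb (b : pred nat) n1 n2 :
  \sum_(n1 <= k < n2) ~~ b k = (n2 - n1) - \sum_(n1 <= k < n2) b k.
Proof.
rewrite -[n2 - n1]muln1 -sum_nat_const_nat -sumnB => [|k _]; last by case: (b k).
by apply: eq_bigr => k _; case: (b k).
Qed.

Lemma peakw_succ f k : peakw f k -> peakw f k.+1 = false.
Proof. by case/andP=> _ lt1; rewrite /peakw /= ltnNge ltnW. Qed.

(* Inserting a large letter into slot i creates no new left peak. *)
Definition near_peak m f i :=
  ((i < m) && peakw f i) || ((i.+1 < m) && peakw f i.+1).

Lemma near_peakE m f i :
  near_peak m f i = (i < m) * peakw f i + (i.+1 < m) * peakw f i.+1 :> nat.
Proof.
rewrite /near_peak !mulnb.
have [pk|_] := boolP (peakw f i); last by rewrite andbF.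
by rewrite (peakw_succ _ _ pk) !andbF andbT orbF addn0.
Qed.

Lemma sum_near_peak m f : \sum_(0 <= i < m) near_peak m f i = 2 * lpkw m f.
Proof.
under eq_bigr => i _ do rewrite near_peakE.
rewrite big_split /= lpkw_from0 mul2n -addnn; congr (_ + _).
  by apply: eq_big_nat => i /andP[_ ->]; rewrite mul1n.
rewrite -lpkw_from0; case: m => [|m]; first by rewrite /lpkw !big_geq.
rewrite big_nat_recr //= ltnn addn0 /lpkw big_add1 /=.
by apply: eq_big_nat => i /andP[_ lt_im]; rewrite ltnS lt_im mul1n.
Qed.

Lemma double_lpkw_le m f : 2 * lpkw m f <= m.
Proof.
rewrite -sum_near_peak -{3}[m]subn0 -[m - 0]muln1 -sum_nat_const_nat.
by apply: leq_sum => i _; apply: leq_b1.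
Qed.

Section Insertion.
Variables (M i m : nat) (f : nat -> nat).
Hypotheses (lt_fM : forall k, f k < M) (f0 : f 0 = 0) (le_im : i <= m).
Let g := insw M i f.
Let le_im1 : i <= m.+1 := leqW le_im.

Let fM_lt k : (f k < M) = true. Proof. exact: lt_fM. Qed.
Let Mf_lt k : (M < f k) = false. Proof. by rewrite ltnNge ltnW. Qed.

Lemma desw_insw :
  desw m.+1 g + (i < m) * (f i.+1 < f i) = desw m f + (i < m).
Proof.
have g0 : g 0 = 0 by rewrite /g insw_le.
rewrite !desw_from0 // (@big_cat_nat _ _ _ i 0 m.+1) // (@big_cat_nat _ _ _ i 0 m) //=.
have -> : \sum_(0 <= k < i) (g k.+1 < g k) = \sum_(0 <= k < i) (f k.+1 < f k).
  by apply: eq_big_nat => k /andP[_ ki]; rewrite /g !insw_le // ltnW.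
rewrite -addnA -addnA; congr (_ + _).
rewrite big_nat_peel [in X in _ = X]big_nat_peel big_nat_peel.
rewrite /g insw_eq insw_le // insw_gt //= fM_lt Mf_lt muln1 muln0.
rewrite big_nat_succ.
under eq_big_nat => k /andP[ik _].
  rewrite !insw_gt /=; [over | lia..].
lia.
Qed.

Lemma lpkw_insw : lpkw m.+1 g + near_peak m f i = lpkw m f + (i < m).
Proof.
rewrite near_peakE addnA !lpkw_from0.
rewrite (@big_cat_nat _ _ _ i 0 m.+1) // (@big_cat_nat _ _ _ i 0 m) //=.
have -> : \sum_(0 <= k < i) peakw g k = \sum_(0 <= k < i) peakw f k.
  by apply: eq_big_nat => k /andP[_ ki]; rewrite /peakw /g !insw_le //; lia.
rewrite -!addnA; congr (_ + _).
rewrite big_nat_peel [in RHS]big_nat_peel big_nat_peel [in RHS]big_nat_peel big_nat_peel.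
rewrite /peakw /g insw_eq (insw_le _ _ _ _ (leq_pred i)) (insw_le _ _ _ _ (leqnn i)).
rewrite !insw_gt //= !fM_lt !Mf_lt /= muln1 !muln0 big_nat_succ add0n.
under eq_big_nat => k /andP[ik _].
  rewrite !insw_gt /=; [over | lia..].
lia.
Qed.

Lemma all_insw_after c a l : i < a ->
  all (fun j => c < g j) (iota a.+1 l) = all (fun j => c < f j) (iota a l).
Proof. by elim: l a => //= l IH a ia; rewrite /g insw_gt // -/g IH // leqW. Qed.

Lemma all_insw_across c a l : c < M -> a <= i.+1 <= a + l ->
  all (fun j => c < g j) (iota a l.+1) = all (fun j => c < f j) (iota a l).
Proof.
move=> cM /andP[ai il]; apply/allP/allP => H j; rewrite mem_iota => /andP[aj jl].
- have [ij|ji] := ltnP i j.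
  + by have := H j.+1; rewrite mem_iota /g insw_gt //=; apply; lia.
  + by have := H j; rewrite mem_iota /g insw_le //; apply; lia.
- case: (ltngtP j i.+1) => [ji|ij|->]; last by rewrite /g insw_eq.
  + by rewrite /g insw_le // H // mem_iota; lia.
  + by rewrite /g insw_gt // H // mem_iota; lia.
Qed.

Lemma lrminw_insw : lrminw m.+1 g = lrminw m f + (i == 0).
Proof.
rewrite /lrminw (@big_cat_nat _ _ _ i.+1 1 m.+2) //.
rewrite (@big_cat_nat _ _ _ i.+1 1 m.+1) //.
rewrite (@big_ltn _ _ _ i.+1 m.+2) // (big_nat_succ _ i.+1 m.+1) /=.
rewrite addnA addnAC; congr (_ + _ + _).
- apply: eq_big_nat => k /andP[_ ki]; rewrite /g insw_le //.
  congr (nat_of_bool _); apply: eq_in_all => j; rewrite mem_iota => jk.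
  by rewrite insw_le //; lia.
- apply: eq_big_nat => k /andP[ik _]; rewrite /g insw_gt //= -/g.
  by case: k ik => // k ik; rewrite all_insw_across //; lia.
- have [->|i_gt0] := posnP i; first by [].
  by rewrite /g -(prednK i_gt0) /= insw_eq insw_le // Mf_lt.
Qed.

Lemma rlminw_insw : rlminw m.+1 g = rlminw m f + (i == m).
Proof.
rewrite /rlminw (@big_cat_nat _ _ _ i.+1 1 m.+2) //.
rewrite (@big_cat_nat _ _ _ i.+1 1 m.+1) //.
rewrite (@big_ltn _ _ _ i.+1 m.+2) // (big_nat_succ _ i.+1 m.+1) /=.
rewrite addnA addnAC; congr (_ + _ + _).
- apply: eq_big_nat => k /andP[_ ki]; rewrite /g insw_le // -/g.
  by rewrite subSn ?all_insw_across //; lia.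
- apply: eq_big_nat => k /andP[ik _]; rewrite /g insw_gt //= -/g.
  by rewrite subSS (all_insw_after _ _ _ (leqW ik)).
- have [->|lt_im] := eqVneq i m; first by rewrite subSS subnn.
  rewrite subSS -[m - i](prednK _) /=; last lia.
  by rewrite /g insw_eq insw_gt //= Mf_lt.
Qed.
End Insertion.

Lemma desw_le m f : desw m f <= m.-1.
Proof.
rewrite -subn1 -[m - 1]muln1 -sum_nat_const_nat.
by apply: leq_sum => k _; apply: leq_b1.
Qed.

Lemma lrminw_gt0 m f : 0 < m -> 0 < lrminw m f.
Proof. by move=> m_gt0; rewrite /lrminw big_ltn. Qed.

Lemma rlminw_gt0 m f : 0 < m -> 0 < rlminw m f.
Proof. by move=> m_gt0; rewrite /rlminw big_nat_recr //= subnn addn1. Qed.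
End Words.

Section Lists.
Local Open Scope nat_scope.
Implicit Types (u v : seq nat) (M i m : nat).

Definition word u : nat -> nat := nth 0 (0 :: u).

Definition ins M i u := take i u ++ M :: drop i u.

Lemma word_ins M i u : i <= size u -> word (ins M i u) = insw M i (word u).
Proof.
move=> iu; apply: functional_extensionality => -[|k] //.
rewrite /word /insw /ins /= nth_cat size_take_min (minn_idPl iu) eqSS.
have [ki|ik] := ltnP k i; first by rewrite nth_take.
have [->|/eqP ik'] := eqVneq k i; first by rewrite subnn.
case: k ik ik' => [|k] ik ik'; first by lia.
have ik2 : i <= k by lia.
by rewrite subSn //= nth_drop subnKC.
Qed.

Lemma perm_ins M i u : perm_eq (ins M i u) (M :: u).
Proof. by rewrite /ins -cat1s perm_catCA /= perm_cons cat_take_drop. Qed.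

Lemma index_ins M i u : M \notin u -> i <= size u -> index M (ins M i u) = i.
Proof.
move=> Mu iu; rewrite /ins index_cat ifN; last by apply: contra Mu; apply: mem_take.
by rewrite size_take_min (minn_idPl iu) /= eqxx addn0.
Qed.

Lemma rem_ins M i u : M \notin u -> rem M (ins M i u) = u.
Proof.
elim: u i => [|a u IH] [|i] //=; rewrite ?eqxx // inE negb_or => /andP[Ma Mu].
by rewrite eq_sym (negbTE Ma) IH.
Qed.

Lemma ins_index_rem M v : M \in v -> ins M (index M v) (rem M v) = v.
Proof.
move=> Mv; rewrite remE /ins take_size_cat ?drop_size_cat; last first.
- by rewrite size_take_min; apply/minn_idPl; rewrite ltnW // index_mem.
- by rewrite size_take_min; apply/minn_idPl; rewrite ltnW // index_mem.
by rewrite -{2}(nth_index 0 Mv) -drop_nth ?index_mem // cat_take_drop.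
Qed.

Lemma size_perm_iota m u : u \in permutations (iota 1 m) -> size u = m.
Proof. by rewrite mem_permutations => /perm_size->; rewrite size_iota. Qed.

Lemma word_lt m u : u \in permutations (iota 1 m) -> forall k, word u k < m.+1.
Proof.
rewrite mem_permutations => pu [|k] //=; rewrite /word /=.
have [ku|] := ltnP k (size u); last by move/(nth_default 0)->.
by move: (mem_nth 0 ku); rewrite (perm_mem pu) mem_iota add1n => /andP[].
Qed.

Lemma permutations_iotaS m :
  perm_eq (permutations (iota 1 m.+1))
          [seq ins m.+1 i u | u <- permutations (iota 1 m), i <- iota 0 m.+1].
Proof.
have iotaS : iota 1 m.+1 = rcons (iota 1 m) m.+1.
  by have := iotaD 1 m 1; rewrite addn1 cats1 => ->.
have Mu u : u \in permutations (iota 1 m) -> m.+1 \notin u.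
  by rewrite mem_permutations => /perm_mem->; rewrite mem_iota; lia.
apply: uniq_perm; first exact: permutations_uniq.
  apply: allpairs_uniq_dep => [|u _|[u1 i1] [u2 i2]];
    rewrite ?permutations_uniq ?iota_uniq //.
  move=> /allpairsPdep[v1 [j1 [pv1 ji1 [-> ->]]]].
  move=> /allpairsPdep[v2 [j2 [pv2 ji2 [-> ->]]]] /= E.
  move: ji1 ji2; rewrite !mem_iota !add0n !ltnS => ji1 ji2.
  have sv1 : j1 <= size v1 by rewrite (size_perm_iota _ _ pv1).
  have sv2 : j2 <= size v2 by rewrite (size_perm_iota _ _ pv2).
  rewrite -(index_ins _ _ _ (Mu _ pv1) sv1) E index_ins ?Mu //.
  by rewrite -(rem_ins _ j1 _ (Mu _ pv1)) E rem_ins ?Mu.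
move=> v; apply/idP/allpairsPdep => [|[u [i [pu _ ->]]]]; last first.
  rewrite mem_permutations (perm_trans (perm_ins _ _ _)) // iotaS perm_sym perm_rcons.
  by rewrite perm_cons perm_sym -mem_permutations.
rewrite mem_permutations => pv.
have Mv : m.+1 \in v by rewrite (perm_mem pv) mem_iota; lia.
exists (rem m.+1 v), (index m.+1 v); split; last by rewrite ins_index_rem.
- rewrite mem_permutations -(perm_cons m.+1) perm_sym (perm_trans _ (perm_to_rem Mv)) //.
  by rewrite perm_sym (permPl pv) iotaS perm_rcons.
- have sv : size v = m.+1 by rewrite (perm_size pv) size_iota.
  by rewrite mem_iota add0n -[in X in _ < X]sv index_mem.
Qed.

Lemma big_permutations_iotaS (V : nmodType) m (G : seq nat -> V) :
  (\sum_(v <- permutations (iota 1 m.+1)) G v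
   = \sum_(u <- permutations (iota 1 m)) \sum_(0 <= i < m.+1) G (ins m.+1 i u))%R.
Proof.
rewrite (perm_big _ (permutations_iotaS m)) big_allpairs_dep.
by apply: eq_bigr => u _; rewrite /index_iota subn0.
Qed.
End Lists.

Section OneLine.
Local Open Scope nat_scope.
Variable m : nat.

Definition oneline (s : 'S_m) : seq nat := [seq (s j).+1 | j <- enum 'I_m].

Lemma oneline_inj : injective oneline.
Proof.
move=> s1 s2 /eq_in_map E; apply/permP => j.
by apply: val_inj; have /= [] := E j (mem_enum _ j).
Qed.

Lemma perm_oneline s : perm_eq (oneline s) (iota 1 m).
Proof.
rewrite -[1]addn0 iotaDl -val_enum_ord -map_comp.
have -> : oneline s = [seq addn 1 (val j) | j <- [seq s j | j <- enum 'I_m]].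
  by rewrite -map_comp.
apply: perm_map.
apply: uniq_perm; rewrite ?enum_uniq // ?(map_inj_uniq (@perm_inj _ s)) ?enum_uniq //.
move=> j; rewrite mem_enum; apply/mapP; exists (s^-1 j)%g; first by rewrite mem_enum.
by rewrite permKV.
Qed.

Lemma big_oneline (V : nmodType) (G : seq nat -> V) :
  (\sum_(s : 'S_m) G (oneline s) = \sum_(u <- permutations (iota 1 m)) G u)%R.
Proof.
transitivity (\sum_(u <- image oneline 'S_m) G u)%R; first by rewrite big_image.
have uniq_im : uniq (image oneline 'S_m).
  by rewrite map_inj_uniq ?enum_uniq //; apply: oneline_inj.
have sub : {subset image oneline 'S_m <= permutations (iota 1 m)}.
  by move=> u /imageP[s _ ->]; rewrite mem_permutations perm_oneline.
apply/perm_big/uniq_perm; rewrite ?permutations_uniq //.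
apply: (uniq_min_size uniq_im sub _).2.
by rewrite size_image card_Sn size_permutations ?iota_uniq // size_iota.
Qed.
End OneLine.

Lemma sumr_if_nat (V : nmodType) n1 n2 (c : pred nat) (A B : V) :
  \sum_(n1 <= k < n2) (if c k then A else B)
  = A *+ (\sum_(n1 <= k < n2) c k)%N + B *+ (\sum_(n1 <= k < n2) ~~ c k)%N.
Proof.
rewrite -!sumrMnr -big_split; apply: eq_bigr => k _.
by case: (c k); rewrite /= ?mulr1n ?mulr0n ?addr0 ?add0r.
Qed.

Section Weights.
Variable R : comNzRingType.
Implicit Types (x y t xy s b : R) (n : nat) (u : seq nat).

Definition des_weight x y t n u : R :=
  x ^+ desw n.+1 (word u) * y ^+ (n - desw n.+1 (word u))
  * t ^+ (lrminw n.+1 (word u) + rlminw n.+1 (word u) - 2).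

Definition peak_weight xy s b n u : R :=
  xy ^+ lpkw n (word u) * s ^+ (n - 2 * lpkw n (word u)) * b ^+ rlminw n (word u).

Section DesSlots.
Variables (x y t : R) (n : nat) (u : seq nat).
Hypothesis pu : u \in permutations (iota 1 n.+1).
Let f := word u.
Let P := des_weight x y t n u.

Let word_insE i : (i <= n.+1)%N -> word (ins n.+2 i u) = insw n.+2 i f.
Proof. by move=> le_i; rewrite word_ins // (size_perm_iota _ _ pu). Qed.

Lemma des_weight_ins i : (i <= n.+1)%N ->
  des_weight x y t n.+1 (ins n.+2 i u)
  = P * (if (i < n.+1)%N && ~~ (f i.+1 < f i)%N then x else y)
      * t ^+ ((i == 0) + (i == n.+1))%N.
Proof.
move=> le_i; have lt_f := word_lt _ _ pu.
have a_gt0 := lrminw_gt0 n.+1 f isT; have r_gt0 := rlminw_gt0 n.+1 f isT.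
have le_d := desw_le n.+1 f.
rewrite /P /des_weight word_insE // lrminw_insw // rlminw_insw // -/f.
set d := desw n.+1 f; set a := lrminw n.+1 f; set r := rlminw n.+1 f.
have -> : desw n.+2 (insw n.+2 i f)
          = (d + ((i < n.+1) && ~~ (f i.+1 < f i)))%N.
  have := desw_insw n.+2 i n.+1 f lt_f (erefl 0) le_i.
  by case: ltnP; case: (f i.+1 < f i)%N => /=; lia.
have -> : (a + (i == 0) + (r + (i == n.+1)) - 2
          = (a + r - 2) + ((i == 0) + (i == n.+1)))%N by lia.
case: ifP => _; rewrite /= ?addn1 ?addn0 exprD.
- by rewrite subSS exprS; ring.
- by rewrite subSn // exprS; ring.
Qed.

Lemma big_ins_des_weight :
  \sum_(0 <= i < n.+2) des_weight x y t n.+1 (ins n.+2 i u)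
  = (x * t + y * t) * P + y * P *+ desw n.+1 f + x * P *+ (n - desw n.+1 f).
Proof.
rewrite big_ltn // big_nat_recr //= (des_weight_ins 0) // (des_weight_ins n.+1) //=.
rewrite ltnn /= expr1.
under eq_big_nat => i /andP[i_gt0 lt_in].
  rewrite des_weight_ins ?(ltnW lt_in) // lt_in (gtn_eqF i_gt0) (ltn_eqF lt_in).
  rewrite expr0 mulr1 if_neg (fun_if ( *%R P)); over.
rewrite sumr_if_nat sum_nat_negb subn1 eqxx /= expr1 -/(desw n.+1 f).
ring.
Qed.
End DesSlots.

Section PeakSlots.
Variables (xy s b : R) (n : nat) (u : seq nat).
Hypothesis pu : u \in permutations (iota 1 n).
Let f := word u.
Let l := lpkw n f.
Let P := peak_weight xy s b n u.
Let Z := xy ^+ l.+1 * s ^+ (n - 2 * l).-1 * b ^+ rlminw n f.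

Let word_insE i : (i <= n)%N -> word (ins n.+1 i u) = insw n.+1 i f.
Proof. by move=> le_i; rewrite word_ins // (size_perm_iota _ _ pu). Qed.

Let le_2l : (2 * l <= n)%N := double_lpkw_le n f.

Lemma peak_weight_ins i : (i <= n)%N ->
  peak_weight xy s b n.+1 (ins n.+1 i u)
  = (if near_peak n f i || (i == n) then s * P else Z) * b ^+ (i == n).
Proof.
move=> le_i; have lt_f := word_lt _ _ pu.
rewrite /P /peak_weight word_insE // rlminw_insw // -/f -/l exprD.
have -> : lpkw n.+1 (insw n.+1 i f) = (l + ~~ (near_peak n f i || (i == n)))%N.
  have := lpkw_insw n.+1 i n f lt_f (erefl 0) le_i.
  have : near_peak n f i -> (i < n)%N.
    by rewrite /near_peak => /orP[] /andP[] //; lia.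
  by case: (near_peak n f i); case: eqVneq => /=; lia.
case: ifP => _; rewrite /= ?addn0 ?addn1.
- by rewrite subSn // exprS; ring.
- by rewrite /Z (_ : n.+1 - 2 * l.+1 = (n - 2 * l).-1)%N; [ring | lia].
Qed.

Lemma big_ins_peak_weight :
  \sum_(0 <= i < n.+1) peak_weight xy s b n.+1 (ins n.+1 i u)
  = s * b * P + s * P *+ (2 * l) + Z *+ (n - 2 * l).
Proof.
rewrite big_nat_recr //= peak_weight_ins // eqxx orbT expr1.
under eq_big_nat => i /andP[_ lt_in].
  rewrite peak_weight_ins ?(ltnW lt_in) // (ltn_eqF lt_in) orbF expr0 mulr1; over.
by rewrite sumr_if_nat sum_nat_negb sum_near_peak subn0 /=; ring.
Qed.
End PeakSlots.
End Weights.
Arguments des_weight {R}.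
Arguments peak_weight {R}.

Lemma eq_of_subr_mul (A : pzRingType) (c z a b : A) : z = 0 -> a - b = z * c -> a = b.
Proof. by move=> -> /eqP; rewrite mul0r subr_eq0 => /eqP. Qed.
Arguments eq_of_subr_mul {A} c {z a b}.

Section Operator.
Variables (R : numFieldType) (y beta : R).

Local Notation Y := (y%:P : {poly R}).
Local Notation half := ((2^-1)%:P : {poly R}).
Local Notation S := (('X + Y) * half).
Local Notation B := (beta%:P : {poly R}).
Local Notation T := ((beta / 2)%:P : {poly R}).

Lemma half_twice : half *+ 2 = 1.
Proof. by rewrite -polyCMn -polyC1; congr _%:P; field. Qed.

Definition ins_op n (P : {poly R}) := (B * S + 'X *+ n) * P + 'X * (Y - 'X) * P^`().

Lemma ins_op_sum n (I : Type) (r : seq I) (F : I -> {poly R}) :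
  ins_op n (\sum_(i <- r) F i) = \sum_(i <- r) ins_op n (F i).
Proof.
by elim: r => [|a r IH]; rewrite ?big_nil ?big_cons -?IH /ins_op ?deriv0 ?derivD; ring.
Qed.

Lemma mulX_derivM (p q : {poly R}) : 'X * (p * q)^`() = 'X * p^`() * q + p * ('X * q^`()).
Proof. by rewrite derivM; ring. Qed.

Lemma mulX_derivXn d : 'X * ('X ^+ d)^`() = 'X ^+ d *+ d :> {poly R}.
Proof. by case: d => [|d]; rewrite derivXn ?mulr0n ?mulr0 // mulrnAr -exprS. Qed.

Lemma mulX_derivCX (a : R) k : 'X * (a%:P ^+ k)^`() = 0.
Proof. by rewrite deriv_exp derivC mul0r mul0rn mulr0. Qed.

Lemma ins_op_des_weight n d c : (d <= n)%N ->
  ins_op n ('X ^+ d * Y ^+ (n - d) * T ^+ c)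
  = ('X * T + Y * T) * ('X ^+ d * Y ^+ (n - d) * T ^+ c)
    + Y * ('X ^+ d * Y ^+ (n - d) * T ^+ c) *+ d
    + 'X * ('X ^+ d * Y ^+ (n - d) * T ^+ c) *+ (n - d).
Proof.
move=> le_dn; rewrite /ins_op [in X in _ + X]mulrAC.
rewrite !mulX_derivM !mulX_derivCX mulX_derivXn.
have -> : 'X *+ n = 'X *+ d + 'X *+ (n - d) :> {poly R} by rewrite -mulrnDr subnKC.
rewrite polyCM; ring.
Qed.

Lemma derivS : S^`() = half.
Proof. by rewrite derivM derivD derivX !derivC addr0 mul1r mulr0 addr0. Qed.

Lemma ins_op_peak_weight n l r : (2 * l <= n)%N ->
  ins_op n (('X * Y) ^+ l * S ^+ (n - 2 * l) * B ^+ r)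
  = S * B * (('X * Y) ^+ l * S ^+ (n - 2 * l) * B ^+ r)
    + S * (('X * Y) ^+ l * S ^+ (n - 2 * l) * B ^+ r) *+ (2 * l)
    + ('X * Y) ^+ l.+1 * S ^+ (n - 2 * l).-1 * B ^+ r *+ (n - 2 * l).
Proof.
move=> le_2ln; rewrite /ins_op [in X in _ + X]mulrAC !mulX_derivM mulX_derivCX.
rewrite !(exprMn _ 'X) mulX_derivM mulX_derivXn mulX_derivCX deriv_exp derivS.
have -> : 'X *+ n = 'X *+ (n - 2 * l) + 'X *+ (2 * l) :> {poly R}.
  by rewrite -mulrnDr subnK.
(* [ring] cannot use [half_twice]: exhibit the difference as a multiple. *)
have z0 : half *+ 2 - 1 = 0 by rewrite half_twice subrr.
case: (n - 2 * l)%N => [|k]; rewrite ?exprS /=.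
  by apply: (eq_of_subr_mul (- ('X ^+ l * Y ^+ l * B ^+ r * ('X + Y) *+ l)) z0); ring.
apply: (eq_of_subr_mul ('X ^+ l * Y ^+ l * B ^+ r * S ^+ k
          * ('X * Y *+ k.+1 - ('X + Y) * half * ('X + Y) *+ l)) z0).
ring.
Qed.

Definition peak_poly n :=
  \sum_(u <- permutations (iota 1 n)) peak_weight ('X * Y) S B n u.

Definition des_poly n :=
  \sum_(u <- permutations (iota 1 n.+1)) des_weight 'X Y T n u.

Lemma peak_poly_rec n : peak_poly n.+1 = ins_op n (peak_poly n).
Proof.
rewrite /peak_poly big_permutations_iotaS ins_op_sum; apply: eq_big_seq => u pu.
by rewrite big_ins_peak_weight // ins_op_peak_weight // double_lpkw_le.
Qed.

Lemma des_poly_rec n : des_poly n.+1 = ins_op n (des_poly n).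
Proof.
rewrite /des_poly big_permutations_iotaS ins_op_sum; apply: eq_big_seq => u pu.
by rewrite big_ins_des_weight // ins_op_des_weight // desw_le.
Qed.

Lemma peak_poly_des_poly n : peak_poly n = des_poly n.
Proof.
elim: n => [|n IH]; last by rewrite peak_poly_rec des_poly_rec IH.
rewrite /peak_poly /des_poly /= !big_seq1 /peak_weight /des_weight.
by rewrite /lpkw /rlminw /desw /lrminw !big_nat1 !big_geq //= !expr0 !mulr1.
Qed.
End Operator.

Theorem theorem1p10 (R : numFieldType) (x y beta : R) (n : nat) :
  \sum_(s : 'S_n)
     (x * y) ^+ lpk s * ((x + y) / 2) ^+ (n - 2 * lpk s)%N * beta ^+ rlmin s
  = \sum_(s : 'S_n.+1)
     x ^+ des s * y ^+ (n - des s)%N * (beta / 2) ^+ (lrmin s + rlmin s - 2)%N.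
Proof.
have := congr1 (horner^~ x) (peak_poly_des_poly _ y beta n).
rewrite /peak_poly /des_poly -!big_oneline /= !horner_sum => E.
apply: etrans (etrans _ E) _; apply: eq_bigr => s _.
  by rewrite /peak_weight !hornerE.
by rewrite /des_weight !hornerE.
Qed.
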